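(* No deterministic online scheduler for the serial-parallel scheduling problem on $p$ processors has awake-time competitive ratio smaller than $\phi-1/p$, where $\phi=(1+\sqrt5)/2$ is the golden ratio: for every such scheduler there is a task arrival process on which its awake time is at least $(\phi-1/p)$ times the optimal offline awake time.
   Context: Serial-parallel scheduling problem: $p$ identical processors. A task arrival process is a finite set of tasks $\tau_i=(\sigma_i,\pi_i,t_i)$ with arrival time $t_i\ge0$, serial work $\sigma_i$ and parallel work $\pi_i$, $1\le\pi_i/\sigma_i\le p$. A task is performed either by its serial job (work $\sigma_i$, at most one processor at any instant) or by its parallel job (work $\pi_i$, any number of processors, rate equal to number of processors); time is continuous, allocations may be fractional via time sharing, preemption is allowed, and the choice of implementation is irrevocable once the task is started (the scheduler may delay starting a task). A task is alive from arrival until completion; awake time is the measure of the set of times at which some task is alive. An online scheduler learns about a task only at its arrival; the optimal offline schedule knows everything in advance. *)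

From HB Require Import structures.
From mathcomp Require Import all_boot all_order all_algebra.
From mathcomp Require Import all_classical all_reals all_analysis.
Set Implicit Arguments. Unset Strict Implicit. Unset Printing Implicit Defensive.
Import Order.TTheory GRing.Theory Num.Theory.
Local Open Scope classical_set_scope.
Local Open Scope ring_scope.

Section Sched.
Variable R : realType.

(* A task tau = (sigma, pi, t, id): serial work, parallel work, arrival
   time, and an identifier (so that identical tasks can occur several times
   in an arrival process). *)
Definition task := (R * R * R * nat)%type.
Definition sigma (x : task) : R := x.1.1.1.
Definition pwork (x : task) : R := x.1.1.2.
Definition arr (x : task) : R := x.1.2.

Definition valid_task (p : nat) (x : task) : Prop :=
  0 <= arr x /\ 0 < sigma x /\ 1 <= pwork x / sigma x <= p%:R.
Definition valid_instance (p : nat) (s : seq task) : Prop :=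
  uniq s /\ (forall x, x \in s -> valid_task p x).

(* A (fractional, preemptive) schedule: for each task, the chosen
   implementation (true = parallel job, false = serial job), the processing
   rate (number of processors allocated) as a function of time, and its
   completion time. *)
Record schedule := Schedule {
  par : task -> bool;
  rate : task -> R -> R;
  comp : task -> R }.

Definition work (S : schedule) (x : task) : R :=
  if par S x then pwork x else sigma x.

Definition done_by (S : schedule) (x : task) (v : R) : \bar R :=
  (\int[lebesgue_measure]_(u in `[arr x, v]) (rate S x u)%:E)%E.

Definition feasible (p : nat) (s : seq task) (S : schedule) : Prop :=
  (forall u, \sum_(x <- s) rate S x u <= p%:R) /\
  forall x, x \in s ->
    [/\ measurable_fun setT (rate S x),
        (forall u, 0 <= rate S x u),
        (forall u, ~~ par S x -> rate S x u <= 1) &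
        (forall u, u < arr x \/ comp S x < u -> rate S x u = 0)] /\
    [/\ arr x <= comp S x,
        done_by S x (comp S x) = (work S x)%:E &
        (forall v, v < comp S x -> (done_by S x v < (work S x)%:E)%E)].

Definition awake (s : seq task) (S : schedule) : \bar R :=
  lebesgue_measure (\big[setU/set0]_(x <- s) `[arr x, comp S x]%classic).

Definition opt_awake (p : nat) (s : seq task) : \bar R :=
  ereal_inf [set awake s S | S in [set S | feasible p s S]].

Definition arrived (s : seq task) (t : R) : seq task :=
  [seq x <- s | arr x <= t].

(* A deterministic online scheduler: maps every arrival process to a
   schedule, and its behaviour up to time t (allocations, and the
   implementation of every task already started) depends only on the tasks
   arrived by time t. *)
Definition online_scheduler (p : nat) (A : seq task -> schedule) : Prop :=
  (forall s, valid_instance p s -> feasible p s (A s)) /\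
  forall s s' t, valid_instance p s -> valid_instance p s' ->
    arrived s t =i arrived s' t ->
    forall x, x \in arrived s t ->
      (forall u, u <= t -> rate (A s) x u = rate (A s') x u) /\
      ((exists u, u <= t /\ 0 < rate (A s) x u) -> par (A s) x = par (A s') x).

Definition golden : R := (1 + Num.sqrt 5) / 2.

End Sched.

From Pilot Require Import Defs.
From HB Require Import structures.
From mathcomp Require Import all_boot all_order all_algebra.
From mathcomp Require Import all_classical all_reals all_analysis.
From mathcomp Require Import measurable_realfun ring lra.
Import Order.TTheory GRing.Theory Num.Theory.
Set Implicit Arguments. Unset Strict Implicit.
Local Open Scope classical_set_scope.
Local Open Scope ring_scope.

(* Let c = phi - 1/p.  At time 0 the adversary releases a probe task with
   serial work 1 and parallel work p/c, which the optimum finishes at time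
   1/c on all p processors.  If the online scheduler runs the probe serially,
   or starts it in parallel only after time 1 - 1/c, it stays awake until
   time 1 = c * (1/c).  Otherwise, right after the probe has been started in
   parallel at time d, the adversary releases p - 1 tasks of serial work
   1 - t at a time t slightly after d.  Running every task serially, the
   optimum is done at time 1, whereas the scheduler, committed to the
   parallel probe, has work p/c + (p - 1)(1 - t) to do on p processors from
   time d on, which keeps it busy until about 1/c + 1 - 1/p.  This exceeds c
   because c^2 - (1 - 1/p) c - 1 = -(phi - 1)/p < 0, by phi^2 = phi + 1. *)

Lemma lebesgue_measure_itv_cc (R : realType) (a b : R) :
  lebesgue_measure (`[a, b] : set R) = (Num.max (b - a) 0)%:E.
Proof.
rewrite lebesgue_measure_itv /= lte_fin; case: ltP => ab.
  by rewrite -EFinB max_l // subr_ge0 ltW.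
by rewrite max_r // subr_le0.
Qed.

Lemma integral_supported (R : realType) (f : R -> R) (D : set R) :
  (forall u, ~ D u -> f u = 0) ->
  (\int[lebesgue_measure]_(u in D) (f u)%:E =
   \int[lebesgue_measure]_u (f u)%:E)%E.
Proof.
move=> f0; rewrite integral_mkcond; apply: eq_integral => u _.
by rewrite patchE; case: ifPn => // /negP; rewrite inE => /f0 ->.
Qed.

Lemma sum_integral_le (R : realType) (I : eqType) (r : seq I)
    (f : I -> R -> R) (K d T : R) :
  (forall i, i \in r -> measurable_fun setT (f i)) ->
  (forall i u, i \in r -> 0 <= f i u) ->
  (forall i u, i \in r -> u < d \/ T < u -> f i u = 0) ->
  (forall u, \sum_(i <- r) f i u <= K) ->
  (\sum_(i <- r) \int[lebesgue_measure]_u (f i u)%:E <=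
   (K * Num.max (T - d) 0)%:E)%E.
Proof.
move=> mf f0 fdT fK.
pose g i u := if i \in r then (f i u)%:E else 0%E.
have mg i : measurable_fun `[d, T] (g i).
  rewrite /g; case: (boolP (i \in r)) => ir; last exact: measurable_cst.
  by apply/measurable_EFinP; apply: measurable_funS (mf i ir).
have g0 i u : `[d, T]%classic u -> (0 <= g i u)%E.
  by move=> _; rewrite /g; case: ifPn => // ir; rewrite lee_fin f0.
rewrite (eq_big_seq (fun i => \int[lebesgue_measure]_(u in `[d, T]) g i u)%E);
  last first.
  move=> i ir; rewrite -(@integral_supported _ (f i) `[d, T]%classic).
    by apply: eq_integral => u _; rewrite /g ir.
  move=> u; rewrite /= in_itv /= => /negP; rewrite negb_and -!ltNge.
  by move=> /orP[] ?; apply: fdT => //; [left | right].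
rewrite -ge0_integral_sum //.
apply: (@le_trans _ _ (\int[lebesgue_measure]_(u in `[d, T]) (cst K%:E) u)%E).
  apply: ge0_le_integral => //.
  - by move=> u Du; apply: sume_ge0 => i _; exact: g0.
  - by apply: emeasurable_sum => i; exact: mg.
  move=> u _; rewrite (eq_big_seq (fun i => (f i u)%:E)); last first.
    by move=> i ir; rewrite /g ir.
  by rewrite sumEFin lee_fin.
by rewrite integral_cst // [X in (_ * X)%E]lebesgue_measure_itv_cc -EFinM.
Qed.

Lemma bigmax_seq_witness d (T : orderType d) (I : eqType) (r : seq I)
    (F : I -> T) (x0 u : T) :
  (x0 < u)%O -> (u <= \big[Order.max/x0]_(i <- r) F i)%O ->
  exists2 i, i \in r & (u <= F i)%O.
Proof.
move=> x0u; elim: r => [|i r IH]; first by rewrite big_nil leNgt x0u.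
rewrite big_cons le_max => /orP[ui|/IH[j jr uj]].
  by exists i; rewrite ?mem_head.
by exists j; rewrite // inE jr orbT.
Qed.

Section Schedules.
Variable R : realType.
Implicit Types (p : nat) (s r : seq (task R)) (S : schedule R) (x : task R).

Section Feasible.
Variables (p : nat) (s : seq (task R)) (S : schedule R).
Hypothesis feasS : feasible p s S.

Lemma feasible_rate_ge0 x : x \in s -> forall u, 0 <= rate S x u.
Proof. by case: feasS => _ /[apply] -[[]]. Qed.

Lemma feasible_rate_out x u :
  x \in s -> u < arr x \/ Defs.comp S x < u -> rate S x u = 0.
Proof. by case: feasS => _ /[apply] -[[_ _ _ +] _]; apply. Qed.

Lemma feasible_serial_rate_le1 x : x \in s -> ~~ par S x ->
  forall u, rate S x u <= 1.
Proof. by case: feasS => _ /[apply] -[[_ _ + _] _] /[swap] u; apply. Qed.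

Lemma feasible_arr_le_comp x : x \in s -> arr x <= Defs.comp S x.
Proof. by case: feasS => _ /[apply] -[_ []]. Qed.

Lemma feasible_rate_le_procs x : x \in s -> forall u, rate S x u <= p%:R.
Proof.
move=> xs u; apply: le_trans (feasS.1 u); rewrite (big_rem x xs) /= lerDl.
by rewrite big_seq sumr_ge0 // => y /mem_rem /feasible_rate_ge0.
Qed.

Lemma feasible_work_integral x : x \in s ->
  (work S x)%:E = (\int[lebesgue_measure]_u (rate S x u)%:E)%E.
Proof.
move=> xs; case: feasS => _ /(_ x xs) -[_ [_ <- _]].
apply: integral_supported => u; rewrite /= in_itv /= => /negP.
rewrite negb_and -!ltNge => /orP[] ?; apply: feasible_rate_out => //.
  by left.
by right.
Qed.

Lemma feasible_sum_work_le r (K d T : R) : {subset r <= s} ->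
  (forall x, x \in r -> forall u, u < d \/ T < u -> rate S x u = 0) ->
  (forall u, \sum_(x <- r) rate S x u <= K) ->
  \sum_(x <- r) work S x <= K * Num.max (T - d) 0.
Proof.
move=> rs rdT rK; rewrite -lee_fin -sumEFin.
rewrite (eq_big_seq (fun x => \int[lebesgue_measure]_u (rate S x u)%:E)%E);
  last by move=> x /rs xs; rewrite feasible_work_integral.
apply: sum_integral_le => // [x /rs xs|x u /rs|x u /rdT]; last exact.
  by case: feasS => _ /(_ x xs) -[[]].
by move=> /feasible_rate_ge0.
Qed.

Lemma comp_ge_start x (K d : R) : x \in s -> 0 < K ->
  (forall u, rate S x u <= K) -> 0 < work S x ->
  (forall u, u < d -> rate S x u = 0) -> d + work S x / K <= Defs.comp S x.
Proof.
move=> xs K0 xK w0 xd.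
have : work S x <= K * Num.max (Defs.comp S x - d) 0.
  have := feasible_sum_work_le (r := [:: x]) (K := K) (d := d).
  rewrite big_seq1; apply => [y|y|u]; last by rewrite big_seq1.
    by rewrite inE => /eqP ->.
  rewrite inE => /eqP -> u [/xd //|?].
  by apply: feasible_rate_out xs _; right.
have [dc|cd] := leP d (Defs.comp S x).
  by rewrite max_l ?subr_ge0 // -lerBrDl ler_pdivrMr // mulrC.
rewrite max_r ?mulr0; last by rewrite subr_le0 ltW.
by move=> /(lt_le_trans w0); rewrite ltxx.
Qed.

Lemma opt_awake_le : (opt_awake p s <= awake s S)%E.
Proof. by apply: ereal_inf_lbound; exists S. Qed.

End Feasible.

Lemma valid_task_sigma_le_work p x S : valid_task p x -> sigma x <= work S x.
Proof.
case=> _ [s0 /andP[ps _]]; rewrite /work; case: (par S x) => //.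
by rewrite ler_pdivlMr // mul1r in ps.
Qed.

Lemma valid_task_work_gt0 p x S : valid_task p x -> 0 < work S x.
Proof.
move=> vx; apply: lt_le_trans (valid_task_sigma_le_work S vx).
by case: vx => _ [].
Qed.

Lemma scaled_opt_awake_le p A s (k : R) : online_scheduler p A ->
  valid_instance p s -> 0 <= k <= 1 ->
  (k%:E * opt_awake p s <= awake s (A s))%E.
Proof.
move=> A_online vs /andP[k0 k1].
apply: le_trans (lee_wpmul2l _ (opt_awake_le (A_online.1 _ vs))) _.
  by rewrite lee_fin.
by apply: gee_pMl; rewrite ?lee_fin //; exact: measure_ge0.
Qed.

Definition uniform_comp (P : pred (task R)) (k : task R -> R) x : R :=
  arr x + (if P x then pwork x else sigma x) / k x.

Definition uniform_schedule (P : pred (task R)) (k : task R -> R) :=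
  Schedule P (fun x u => k x * \1_(`[arr x, uniform_comp P k x]) u)
    (uniform_comp P k).

Lemma uniform_schedule_feasible p s P k :
  (forall x, x \in s -> valid_task p x) -> (forall x, x \in s -> 0 < k x) ->
  (forall x, x \in s -> ~~ P x -> k x <= 1) -> \sum_(x <- s) k x <= p%:R ->
  feasible p s (uniform_schedule P k).
Proof.
move=> sv k0 k1 kp; split=> [u|x xs].
  apply: le_trans kp; rewrite big_seq [leRHS]big_seq.
  apply: ler_sum => x xs /=; rewrite indicE.
  by case: (_ \in _); rewrite ?mulr1 ?mulr0 // ltW // k0.
set S := uniform_schedule P k; set c := uniform_comp P k x.
have k0x := k0 x xs; have w0 := valid_task_work_gt0 S (sv x xs).
have wE : work S x = k x * (c - arr x).
  by rewrite /c /uniform_comp addrAC subrr add0r mulrC divfK ?gt_eqF.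
have ac : arr x < c by rewrite -subr_gt0 -(pmulr_rgt0 _ k0x) -wE.
have done_byE v : v <= c ->
    done_by S x v = (k x * Num.max (v - arr x) 0)%:E.
  move=> vc; rewrite /done_by (@eq_integral _ _ _ _ _ (cst (k x)%:E)).
    by rewrite integral_cst // [X in (_ * X)%E]lebesgue_measure_itv_cc.
  move=> u; rewrite inE /= in_itv /= => /andP[au uv].
  by rewrite indicE mem_set ?mulr1 //= in_itv /= au (le_trans uv).
split; split=> //.
- by apply: measurable_funM; [exact: measurable_cst | exact: measurable_indic].
- by move=> u; rewrite /= indicE mulr_ge0 ?ler0n // ltW.
- move=> u /= /negPf Pn; rewrite indicE.
  by case: (_ \in _); rewrite ?mulr1 ?mulr0 // k1 // Pn.
- move=> u /= uac; rewrite indicE memNset ?mulr0 //= in_itv /=.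
  by apply/negP; rewrite negb_and -!ltNge; case: uac => ->; rewrite ?orbT.
- exact: ltW.
- by rewrite done_byE // max_l ?subr_ge0 ?ltW // -wE.
move=> v /= vc; rewrite done_byE ?ltW // lte_fin wE ltr_pM2l //.
by rewrite gt_max ltrD2r vc subr_gt0.
Qed.

Lemma measurable_alive s S :
  measurable (\big[setU/set0]_(x <- s) `[arr x, Defs.comp S x]%classic).
Proof. by apply: bigsetU_measurable => x _; exact: measurable_itv. Qed.

Lemma awake_le s S (B : R) : 0 <= B ->
  (forall x, x \in s -> 0 <= arr x /\ Defs.comp S x <= B) ->
  (awake s S <= B%:E)%E.
Proof.
move=> B0 sB; have := lebesgue_measure_itv_cc 0 B.
rewrite subr0 max_l // => <-; apply: le_measure; rewrite ?inE.
- exact: measurable_alive.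
- exact: measurable_itv.
rewrite -bigcup_seq => u [x /= xs]; rewrite !in_itv /= => /andP[xu ux].
by have [x0 xB] := sB x xs; rewrite (le_trans x0 xu) (le_trans ux xB).
Qed.

Lemma awake_ge s S (T : R) : 0 <= T ->
  (forall u, 0 <= u <= T ->
     exists2 x, x \in s & arr x <= u <= Defs.comp S x) ->
  (T%:E <= awake s S)%E.
Proof.
move=> T0 sT; have := lebesgue_measure_itv_cc 0 T.
rewrite subr0 max_l // => <-; apply: le_measure; rewrite ?inE.
- exact: measurable_itv.
- exact: measurable_alive.
rewrite -bigcup_seq => u; rewrite /= in_itv /= => /sT[x xs xu].
by exists x => //=; rewrite in_itv.
Qed.

(* The alive interval of [x0] starts at 0 and meets every other alive
   interval, so the alive set covers [0, max completion]. *)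
Lemma awake_ge_bigmax_comp s S x0 :
  x0 \in s -> arr x0 = 0 -> (forall x, x \in s -> arr x <= Defs.comp S x0) ->
  ((\big[Num.max/0]_(x <- s) Defs.comp S x)%:E <= awake s S)%E.
Proof.
move=> x0s ax0 sx0; apply: awake_ge => [|u /andP[u0 uT]].
  exact: bigmax_ge_id.
have [ux0|x0u] := leP u (Defs.comp S x0).
  by exists x0; rewrite // ax0 u0.
have [|x xs ux] := bigmax_seq_witness _ uT.
  by apply: le_lt_trans x0u; rewrite -ax0 sx0.
by exists x; rewrite // ux andbT (le_trans (sx0 x xs)) ?ltW.
Qed.

End Schedules.

Lemma golden_sqr (R : realType) : golden R ^+ 2 = golden R + 1.
Proof.
have s5 : Num.sqrt 5 ^+ 2 = 5 :> R by rewrite sqr_sqrtr // ler0n.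
apply/eqP; rewrite -subr_eq0 /golden; set r := Num.sqrt 5.
have -> : ((1 + r) / 2) ^+ 2 - ((1 + r) / 2 + 1) = (r ^+ 2 - 5) / 4 by field.
by rewrite s5 subrr mul0r.
Qed.

Lemma golden_bounds (R : realType) : 3 / 2 <= golden R <= 2.
Proof.
have s5 : Num.sqrt 5 ^+ 2 = 5 :> R by rewrite sqr_sqrtr // ler0n.
have s50 : 0 <= Num.sqrt 5 :> R := sqrtr_ge0 _.
rewrite /golden; apply/andP; split; nra.
Qed.

Section Adversary.
Variables (R : realType) (p : nat) (A : seq (task R) -> schedule R).
Hypotheses (p_gt1 : (1 < p)%N) (A_online : online_scheduler p A).

Local Notation q := (p%:R : R).
Local Notation c := (golden R - q^-1).
Local Notation slack := (c^-1 + 1 - q^-1 - c).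

Definition ratio_witness (s : seq (task R)) : Prop :=
  [/\ valid_instance p s, s != [::] &
      (c%:E * opt_awake p s <= awake s (A s))%E].

Lemma procs_ge2 : 2 <= q.
Proof. by rewrite ler_nat. Qed.

Lemma procs_gt0 : 0 < q.
Proof. by rewrite ltr0n ltnW. Qed.

Lemma ratio_ge1 : 1 <= c.
Proof.
have /andP[g32 _] := golden_bounds R.
have : q^-1 <= 2^-1.
  by rewrite lef_pV2 ?posrE ?procs_ge2 ?procs_gt0.
lra.
Qed.

Lemma ratio_lt_procs : c < q.
Proof.
have /andP[_ g2] := golden_bounds R.
have w0 : 0 < q^-1 by rewrite invr_gt0 procs_gt0.
by apply: lt_le_trans procs_ge2; lra.
Qed.

Lemma inv_ratio_gt0 : 0 < c^-1.
Proof. by rewrite invr_gt0; have := ratio_ge1; lra. Qed.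

Lemma slack_gt0 : 0 < slack.
Proof.
have c0 : 0 < c by have := ratio_ge1; lra.
have w0 : 0 < q^-1 by rewrite invr_gt0 procs_gt0.
have g1 : 1 < golden R by have := golden_bounds R; lra.
have : c * slack = q^-1 * (golden R - 1).
  rewrite mulrDr mulrBr mulrDr divff ?gt_eqF //.
  have := golden_sqr R; rewrite expr2 => gg; nra.
by move=> h; rewrite -(pmulr_rgt0 _ c0) h mulr_gt0 // subr_gt0.
Qed.

Lemma slack_lt_inv_ratio : slack < c^-1.
Proof. by have := golden_bounds R; lra. Qed.

Definition probe : task R := (1, q * c^-1, 0, 0%N).

Lemma valid_probe : valid_task p probe.
Proof.
rewrite /valid_task /arr /sigma /pwork /= divr1; split=> //; split=> //.
have c1 := ratio_ge1; have q2 := procs_ge2; have c0 : 0 < c by lra.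
rewrite ler_pdivlMr // ler_pdivrMr // mul1r ltW ?ratio_lt_procs //=; nra.
Qed.

Lemma valid_probe_instance : valid_instance p [:: probe].
Proof. by split=> // x; rewrite mem_seq1 => /eqP ->; exact: valid_probe. Qed.

Lemma opt_awake_probe : (opt_awake p [:: probe] <= (c^-1)%:E)%E.
Proof.
have feas : feasible p [:: probe] (uniform_schedule xpredT (fun=> q)).
  apply: uniform_schedule_feasible => [x||//|]; last by rewrite big_seq1.
    by rewrite mem_seq1 => /eqP ->; exact: valid_probe.
  by move=> x _; exact: procs_gt0.
apply: le_trans (opt_awake_le feas) _.
apply: awake_le => [|x]; first exact: ltW inv_ratio_gt0.
rewrite mem_seq1 => /eqP -> /=; split=> //.
by rewrite /uniform_comp /= add0r mulrC mulKf ?gt_eqF ?procs_gt0.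
Qed.

Lemma probe_rate_before_arrival s S u : feasible p s S -> probe \in s ->
  u < 0 -> rate S probe u = 0.
Proof.
by move=> feas ps u0; exact: (feasible_rate_out feas ps (or_introl u0)).
Qed.

Lemma comp_par_probe_ge s S (d : R) : feasible p s S -> probe \in s ->
  par S probe -> (forall u, u < d -> rate S probe u = 0) ->
  d + c^-1 <= Defs.comp S probe.
Proof.
move=> feas ps pS idle.
have := comp_ge_start feas ps procs_gt0 (feasible_rate_le_procs feas ps).
rewrite /work pS mulrC mulKf ?gt_eqF ?procs_gt0 //; apply=> //.
by rewrite mulr_gt0 ?procs_gt0 ?inv_ratio_gt0.
Qed.

Local Notation S1 := (A [:: probe]).

Lemma feasible_S1 : feasible p [:: probe] S1.
Proof. exact: A_online.1 _ valid_probe_instance. Qed.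

Lemma awake_probe_ge_comp :
  ((Defs.comp S1 probe)%:E <= awake [:: probe] S1)%E.
Proof.
apply: le_trans (awake_ge_bigmax_comp (mem_head _ _) _ _) => //.
  by rewrite big_cons big_nil lee_fin le_max lexx.
move=> x; rewrite mem_seq1 => /eqP ->.
by apply: (feasible_arr_le_comp feasible_S1); rewrite mem_seq1.
Qed.

Lemma probe_ratio_witness : (1%:E <= awake [:: probe] S1)%E ->
  ratio_witness [:: probe].
Proof.
have c1 := ratio_ge1; move=> aw1; split=> //; first exact: valid_probe_instance.
apply: le_trans aw1; apply: le_trans (lee_wpmul2l _ opt_awake_probe) _.
  by rewrite lee_fin; lra.
by rewrite -EFinM divff ?gt_eqF //; lra.
Qed.

Lemma serial_probe_awake : ~~ par S1 probe -> (1%:E <= awake [:: probe] S1)%E.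
Proof.
move=> sp; apply: le_trans awake_probe_ge_comp; rewrite lee_fin.
have := comp_ge_start (d := 0) feasible_S1 (mem_head _ _) ltr01
  (feasible_serial_rate_le1 feasible_S1 (mem_head _ _) sp).
rewrite /work (negPf sp) add0r divr1; apply=> // u.
by apply: probe_rate_before_arrival feasible_S1 (mem_head _ _).
Qed.

Definition probe_idle : set R :=
  [set v | forall u, u < v -> rate S1 probe u = 0].

Definition probe_start : R := sup probe_idle.

Lemma probe_idle0 : probe_idle 0.
Proof.
by move=> u; apply: probe_rate_before_arrival feasible_S1 (mem_head _ _).
Qed.

Lemma has_sup_probe_idle : has_sup probe_idle.
Proof.
split; first by exists 0; exact: probe_idle0.
exists (Defs.comp S1 probe) => v idle.
have w0 := valid_task_work_gt0 S1 valid_probe.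
have ps : probe \in [:: probe] by rewrite mem_seq1.
have := comp_ge_start feasible_S1 ps procs_gt0
  (feasible_rate_le_procs feasible_S1 ps) w0 idle.
by apply: le_trans; rewrite lerDl divr_ge0 ?ltW ?procs_gt0.
Qed.

Lemma probe_start_ge0 : 0 <= probe_start.
Proof. exact: sup_upper_bound has_sup_probe_idle _ probe_idle0. Qed.

Lemma probe_idle_before_start u : u < probe_start -> rate S1 probe u = 0.
Proof.
rewrite -subr_gt0 => /sup_adherent /(_ has_sup_probe_idle) [v idle].
by rewrite opprB addrCA subrr addr0; exact: idle.
Qed.

Lemma probe_busy_after_start t : probe_start < t ->
  exists2 u, u < t & 0 < rate S1 probe u.
Proof.
move=> st; apply: contrapT => busy; have idle : probe_idle t.
  move=> u ut; apply/eqP; rewrite eq_le.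
  rewrite (feasible_rate_ge0 feasible_S1) ?mem_seq1 // andbT leNgt.
  by apply/negP => ?; apply: busy; exists u.
by move: st; rewrite ltNge (sup_upper_bound has_sup_probe_idle).
Qed.

Lemma late_start_awake : par S1 probe -> 1 - c^-1 <= probe_start ->
  (1%:E <= awake [:: probe] S1)%E.
Proof.
move=> pp late; apply: le_trans awake_probe_ge_comp; rewrite lee_fin.
apply: le_trans (comp_par_probe_ge feasible_S1 _ pp probe_idle_before_start).
  by rewrite -lerBlDr.
by rewrite mem_seq1.
Qed.

(* Identifiers [i.+1] keep the burst tasks distinct from each other and from
   the probe, whose identifier is 0. *)
Definition burst (t : R) : seq (task R) :=
  [seq (1 - t, q * (1 - t), t, i.+1) | i <- iota 0 p.-1].

Definition adversary (t : R) : seq (task R) := probe :: burst t.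

Lemma burst_taskP t y : y \in burst t ->
  [/\ arr y = t, sigma y = 1 - t & pwork y = q * (1 - t)].
Proof. by move=> /mapP[i _ ->]. Qed.

Lemma size_adversary t : size (adversary t) = p.
Proof. by rewrite /= size_map size_iota prednK // ltnW. Qed.

Lemma valid_adversary t : 0 <= t < 1 -> valid_instance p (adversary t).
Proof.
move=> /andP[t0 t1]; split.
  rewrite /= map_inj_uniq ?iota_uniq ?andbT; last by move=> i j [].
  by apply/mapP => -[i _ /(congr1 snd)].
move=> x; rewrite inE /valid_task => /predU1P[-> | /burst_taskP[-> -> ->]].
  exact: valid_probe.
by rewrite mulfK ?gt_eqF ?subr_gt0 // lexx ler1n ltnW.
Qed.

Lemma opt_awake_adversary t : 0 <= t < 1 ->
  (opt_awake p (adversary t) <= 1%:E)%E.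
Proof.
move=> /[dup] /valid_adversary [_ valid] /andP[t0 t1].
have feas : feasible p (adversary t) (uniform_schedule xpred0 (fun=> 1)).
  apply: uniform_schedule_feasible => //.
  by rewrite big_const_seq count_predT iter_addr_0 size_adversary.
apply: le_trans (opt_awake_le feas) _; apply: awake_le => // x.
rewrite inE => /predU1P[-> | /burst_taskP[xt xs _]].
  by rewrite /= /uniform_comp /= add0r divr1.
by rewrite /= /uniform_comp /= xt xs divr1 subrKC t0.
Qed.

Lemma arrived_adversary t u : u < t ->
  arrived [:: probe] u =i arrived (adversary t) u.
Proof.
move=> ut x; rewrite /arrived /= (@eq_in_filter _ _ pred0) ?filter_pred0 //.
by move=> y /burst_taskP[-> _ _] /=; rewrite leNgt ut.
Qed.

Section Burst.
Variable t : R.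
Hypothesis t01 : 0 <= t < 1.

Local Notation S2 := (A (adversary t)).

Lemma feasible_S2 : feasible p (adversary t) S2.
Proof. exact: A_online.1 _ (valid_adversary t01). Qed.

Lemma online_probe_agrees u : 0 <= u < t ->
  (forall v, v <= u -> rate S1 probe v = rate S2 probe v) /\
  ((exists v, v <= u /\ 0 < rate S1 probe v) -> par S1 probe = par S2 probe).
Proof.
move=> /andP[u0 ut].
apply: (A_online.2 _ _ u valid_probe_instance (valid_adversary t01)).
  exact: arrived_adversary.
by rewrite /arrived /= u0 mem_head.
Qed.

Lemma adversary_probe_rate u : u < t -> rate S2 probe u = rate S1 probe u.
Proof.
move=> ut; have [u0|u0] := ltP u 0.
  by rewrite (probe_rate_before_arrival feasible_S1)
    ?(probe_rate_before_arrival feasible_S2) ?mem_head.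
by have /online_probe_agrees[-> //] : 0 <= u < t by rewrite u0.
Qed.

Lemma adversary_probe_par : probe_start < t -> par S2 probe = par S1 probe.
Proof.
move=> st; have [u ut busy] := probe_busy_after_start st.
have u0 : 0 <= u.
  rewrite leNgt; apply/negP => u0; move: busy.
  by rewrite (probe_rate_before_arrival feasible_S1) ?mem_head ?ltxx.
have /online_probe_agrees[_ -> //] : 0 <= u < t by rewrite u0.
by exists u.
Qed.

Lemma adversary_sum_work_ge : par S2 probe ->
  q * c^-1 + (q - 1) * (1 - t) <= \sum_(x <- adversary t) work S2 x.
Proof.
move=> pp; rewrite big_cons {1}/work pp lerD2l.
have -> : (q - 1) * (1 - t) = \sum_(y <- burst t) (1 - t).
  rewrite big_const_seq count_predT iter_addr_0 size_map size_iota.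
  rewrite -[RHS]mulr_natl; congr (_ * _).
  by rewrite -[in LHS](prednK (ltnW p_gt1)) -natr1 addrK.
rewrite big_seq [leRHS]big_seq; apply: ler_sum => y yb.
have [_ valid] := valid_adversary t01.
have [_ <- _] := burst_taskP yb; apply: valid_task_sigma_le_work.
by apply: valid; rewrite inE yb orbT.
Qed.

Local Notation last_comp :=
  (\big[Num.max/0]_(x <- adversary t) Defs.comp S2 x).

Lemma le_last_comp x : x \in adversary t -> Defs.comp S2 x <= last_comp.
Proof. by move=> xs; apply: le_bigmax_seq. Qed.

Lemma awake_adversary_ge : t <= Defs.comp S2 probe ->
  (last_comp%:E <= awake (adversary t) S2)%E.
Proof.
move=> tc; apply: awake_ge_bigmax_comp (mem_head _ _) _ _ => // x.
rewrite inE => /predU1P[-> | /burst_taskP[-> _ _]] //.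
by apply: (feasible_arr_le_comp feasible_S2); rewrite mem_head.
Qed.

Lemma adversary_sum_work_le (d : R) : d < t ->
  (forall u, u < d -> rate S2 probe u = 0) -> d <= Defs.comp S2 probe ->
  \sum_(x <- adversary t) work S2 x <= q * (last_comp - d).
Proof.
move=> dt idle dc.
have dT : d <= last_comp by apply: le_trans dc (le_last_comp (mem_head _ _)).
rewrite -[X in _ <= _ * X](@max_l _ _ _ 0) ?subr_ge0 //.
apply: (feasible_sum_work_le feasible_S2) => // [x xs u [ud|Tu]|].
- case/predU1P: (xs) => [-> | /burst_taskP[xt _ _]]; first exact: idle.
  by apply: (feasible_rate_out feasible_S2 xs); left; rewrite xt (lt_trans ud).
- apply: (feasible_rate_out feasible_S2 xs); right.
  exact: le_lt_trans (le_last_comp xs) Tu.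
exact: feasible_S2.1.
Qed.

End Burst.

(* Divided by q, the hypothesis reads
   T >= d + 1/c + (1 - 1/q) (1 - d - slack); the slack is chosen so that the
   right-hand side is c + (d + slack)/q. *)
Lemma ratio_le_of_work_bound (d T : R) : 0 <= d ->
  q * c^-1 + (q - 1) * (1 - (d + slack)) <= q * (T - d) -> c <= T.
Proof.
move=> d0 h; have q0 := procs_gt0; have s0 := slack_gt0.
have qw : q * q^-1 = 1 by rewrite divff ?gt_eqF.
rewrite -(ler_pM2l q0); nra.
Qed.

Lemma early_start_witness : par S1 probe -> probe_start < 1 - c^-1 ->
  ratio_witness (adversary (probe_start + slack)).
Proof.
move=> pp early; set t := probe_start + slack.
have s0 := slack_gt0; have sa := slack_lt_inv_ratio.
have d0 := probe_start_ge0; have c1 := ratio_ge1.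
have t01 : 0 <= t < 1 by apply/andP; split; rewrite /t; lra.
have st : probe_start < t by rewrite /t; lra.
have pp2 := adversary_probe_par t01 st; rewrite pp in pp2.
have idle2 u : u < probe_start -> rate (A (adversary t)) probe u = 0.
  move=> us; rewrite adversary_probe_rate ?probe_idle_before_start //.
  exact: lt_trans st.
have comp2 := comp_par_probe_ge (feasible_S2 t01) (mem_head _ _) pp2 idle2.
split=> //; first exact: valid_adversary.
apply: le_trans (_ : c%:E <= _)%E.
  rewrite -[leRHS]mule1; apply: lee_wpmul2l; last exact: opt_awake_adversary.
  by rewrite lee_fin; lra.
apply: le_trans (awake_adversary_ge t01 _); last first.
  by apply: le_trans comp2; rewrite /t lerD2l ltW.
rewrite lee_fin; apply: ratio_le_of_work_bound d0 _.
apply: le_trans (adversary_sum_work_ge t01 pp2) _.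
apply: (adversary_sum_work_le t01 st idle2); apply: le_trans comp2.
by rewrite lerDl ltW ?inv_ratio_gt0.
Qed.

Lemma online_ratio_witness : exists s, ratio_witness s.
Proof.
have [pp|/serial_probe_awake/probe_ratio_witness] := boolP (par S1 probe);
  last by exists [:: probe].
have [late|early] := leP (1 - c^-1) probe_start.
  by exists [:: probe]; exact/probe_ratio_witness/late_start_awake.
by exists (adversary (probe_start + slack)); exact: early_start_witness.
Qed.

End Adversary.

Theorem proposition8p1 (R : realType) (p : nat) (hp : (1 <= p)%N)
    (A : seq (task R) -> schedule R) :
  online_scheduler p A ->
  exists s : seq (task R),
    [/\ valid_instance p s, s != [::] &
        (((golden R - p%:R^-1)%:E * opt_awake p s) <= awake s (A s))%E].
Proof.
move=> A_online; have [p_gt1|p_le1] := ltnP 1 p.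
  exact: online_ratio_witness.
have p1 : p = 1%N by apply/eqP; rewrite eqn_leq p_le1 hp.
pose x : task R := (1, 1, 0, 0%N).
have valid : valid_instance p [:: x].
  split=> // y; rewrite mem_seq1 => /eqP ->.
  rewrite /valid_task /x /arr /sigma /pwork /= divr1 p1.
  by split=> //; split; [exact: ltr01 | rewrite !lexx].
exists [:: x]; split=> //; apply: scaled_opt_awake_le => //.
by have := golden_bounds R; rewrite p1 invr1; lra.
Qed.
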